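(* Let $\omega\in\Omega$, $x,y\in X$, $z\in\mathbb C\setminus\sigma_\omega$ and $r\ge0$. Then $$G_{\omega,r}(x,y;z)=G_{\omega,0}(x,y;z)-\sum_{s=\max(1,d(x,y))}^{r}p_sN_{s-1}\,g_{\omega,s-1}(x;z)\,g_{\omega,s}(y;z),$$ where an empty sum is zero.
   Context: $(X,\mathbf P,\mathbf n)$ is a hierarchical structure: $X$ infinite countable, $\mathbf n=(n_r)_{r\ge0}$ positive integers, $\mathcal P_r$ partitions of $X$ (''clusters of rank $r$'') with $n_0=1$ and rank-0 clusters singletons, every rank-$r$ cluster ($r\ge1$) a disjoint union of exactly $n_r$ rank-$(r-1)$ clusters, and any two points in a common cluster of some rank. $N_r=\prod_{s=0}^rn_s$, $Q_r(x)$ is the rank-$r$ cluster containing $x$, $d(x,y)=\min\{r:y\in Q_r(x)\}$, $(E_r\psi)(x)=\frac1{N_r}\sum_{d(x,y)\le r}\psi(y)$; $(p_r)_{r\ge1}$ positive with $\sum p_r=1$, $p_0=0$. For $\omega\in\mathbb R^X$, $V_\omega$ is multiplication by $\omega(x)$, and $H_{\omega,r}=V_\omega+\sum_{s=0}^rp_sE_s$ (so $H_{\omega,0}=V_\omega$). For each rank-$r$ cluster $Q$, $\ell^2(Q)=\{\psi:\psi=0\text{ off }Q\}$ is invariant under $H_{\omega,r}$; let $\sigma(\omega,Q)$ be the (finite) set of eigenvalues of $H_{\omega,r}$ restricted to $\ell^2(Q)$, and $\sigma_\omega=\bigcup\sigma(\omega,Q)$ over all clusters $Q$ of all ranks $r$.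 For $z\notin\sigma_\omega$, $G_{\omega,r}(x,y;z)=\langle\delta_x,(H_{\omega,r}\!\upharpoonright_{\ell^2(Q_r(x))}-z)^{-1}\delta_y\rangle$ if $d(x,y)\le r$ and $0$ otherwise (this is the matrix element $\langle\delta_x,(H_{\omega,r}-z)^{-1}\delta_y\rangle$), and $g_{\omega,r}(t;z)=\frac1{N_r}\sum_{d(t',t)\le r}G_{\omega,r}(t',t;z)$. *)

From mathcomp Require Import all_boot all_algebra.
From mathcomp Require Import all_classical all_reals all_analysis.
From mathcomp.real_closed Require Import complex.
Import GRing.Theory Num.Theory numFieldNormedType.Exports.

Set Implicit Arguments.
Unset Strict Implicit.
Unset Printing Implicit Defensive.

Local Open Scope ring_scope.

(* The partition P_r is encoded by a function [Q r] sending x to the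
   rank-r cluster Q_r(x) containing x, given as a canonical duplicate-free
   enumeration (the same list for all points of the cluster). *)
Record hier (X : countType) := Hier {
  nn : nat -> nat;
  Q : nat -> X -> seq X;
  X_infinite : forall s : seq X, exists x, x \notin s;
  nn_pos : forall r, (0 < nn r)%N;
  nn0 : nn 0 = 1%N;
  Q_uniq : forall r x, uniq (Q r x);
  Q_self : forall r x, x \in Q r x;
  Q_canon : forall r x y, y \in Q r x -> Q r y = Q r x;
  Q0 : forall x, Q 0 x = [:: x];
  Q_nest : forall r x y, y \in Q r.+1 x -> {subset Q r y <= Q r.+1 x};
  Q_count : forall r x, size (undup [seq Q r y | y <- Q r.+1 x]) = nn r.+1;
  Q_conn : forall x y, exists r, y \in Q r x
}.

Section Defs.
Variables (X : countType) (H : hier X).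

Definition NN (r : nat) : nat := \prod_(s < r.+1) nn H s.

Definition dist (x y : X) : nat :=
  ex_minn (P := fun r => y \in Q H r x) (Q_conn H x y).

Variables (R : realType) (p : nat -> R) (om : X -> R).

(* Matrix of H_{om,r} restricted to l^2(Q_r(x)), in the basis of delta
   functions of the points of Q_r(x) (in the order of the enumeration):
   entry (u,v) = om(u) [u = v] + sum_{s=0}^r p_s [d(u,v) <= s] / N_s. *)
Definition Hmat (r : nat) (x : X) : 'M[R[i]]_(size (Q H r x)) :=
  \matrix_(i, j)
    (let u := nth x (Q H r x) i in
     let v := nth x (Q H r x) j in
     ((om u * (i == j)%:R
       + \sum_(s < r.+1) p s / (NN s)%:R * (dist u v <= s)%:R)%:C)%C).

Definition in_sigma (z : R[i]) : Prop :=
  exists r x, eigenvalue (Hmat r x) z.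

Definition mx_at (k : nat) (A : 'M[R[i]]_k) (i j : nat) : R[i] :=
  match @insub nat (fun m => (m < k)%N) 'I_k i,
        @insub nat (fun m => (m < k)%N) 'I_k j with
  | Some i', Some j' => A i' j'
  | _, _ => 0
  end.

Definition Green (r : nat) (x y : X) (z : R[i]) : R[i] :=
  if (dist x y <= r)%N then
    mx_at (invmx (Hmat r x - z%:M)) (index x (Q H r x)) (index y (Q H r x))
  else 0.

Definition gfun (r : nat) (t : X) (z : R[i]) : R[i] :=
  ((NN r)%:R)^-1 * \sum_(t' <- Q H r t) Green r t' t z.

End Defs.

From mathcomp Require Import all_boot all_algebra.
From mathcomp Require Import all_classical all_reals all_analysis.
From mathcomp.real_closed Require Import complex.
From mathcomp Require Import ring.
Import GRing.Theory Num.Theory numFieldNormedType.Exports.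
Local Open Scope classical_set_scope.
Local Open Scope ring_scope.

Set Implicit Arguments.
Unset Strict Implicit.

(* Second resolvent identity.  On a rank-(r+1) cluster, H_{r+1} - H_r is
   p_{r+1} / N_{r+1} times the all-ones matrix, so
   G_r - G_{r+1} = (p_{r+1} / N_{r+1}) G_r J G_{r+1}.  Since G_r(x, .) is
   supported on Q_r(x) and G_r is symmetric, the row sums of G_r are
   N_r g_r(x), and the column sums of G_{r+1} are N_{r+1} g_{r+1}(y); hence
   G_r(x,y) - G_{r+1}(x,y) = p_{r+1} N_r g_r(x) g_{r+1}(y) whenever
   d(x,y) <= r+1.  Telescoping from rank 0 gives the formula, the terms with
   s < d(x,y) vanishing because then G_s(x,y) = 0. *)

Lemma big_restrict_uniq (T : eqType) (V : nmodType) (s t : seq T)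
    (f : T -> V) :
  uniq s -> uniq t -> {subset t <= s} -> (forall w, w \notin t -> f w = 0) ->
  \sum_(w <- s) f w = \sum_(w <- t) f w.
Proof.
move=> us ut sub_ts f0; rewrite (bigID (mem t)) /= [X in _ + X]big1 ?addr0;
  last by move=> w /f0.
rewrite -big_filter; apply: perm_big; apply: uniq_perm => //.
- exact: filter_uniq.
by move=> w; rewrite mem_filter; case wt: (w \in t) => //=; apply: sub_ts.
Qed.

Lemma big_delta_seq (T : eqType) (V : pzSemiRingType) (s : seq T) a
    (f : T -> V) :
  uniq s -> a \in s -> \sum_(w <- s) (a == w)%:R * f w = f a.
Proof.
move=> us sa; rewrite (@big_restrict_uniq _ _ _ [:: a]) //.
- by rewrite big_seq1 eqxx mul1r.
- by move=> w; rewrite inE => /eqP ->.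
by move=> w; rewrite inE eq_sym => /negbTE ->; rewrite mul0r.
Qed.

Section Clusters.
Variables (X : countType) (H : hier X).

Lemma Q_subS r x : {subset Q H r x <= Q H r.+1 x}.
Proof. exact: (Q_nest (Q_self H r.+1 x)). Qed.

Lemma Q_mono r s x : (r <= s)%N -> {subset Q H r x <= Q H s x}.
Proof.
elim: s => [|s IH]; first by rewrite leqn0 => /eqP ->.
rewrite leq_eqVlt => /orP [/eqP -> //|]; rewrite ltnS => /IH sub w /sub.
exact: Q_subS.
Qed.

Lemma mem_Q_sym r x y : y \in Q H r x -> x \in Q H r y.
Proof. by move=> Qy; rewrite (Q_canon Qy) Q_self. Qed.

Lemma dist_leqE r x y : (dist H x y <= r)%N = (y \in Q H r x).
Proof.
rewrite /dist; case: ex_minnP => m Qm minm; apply/idP/idP => le_r.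
  exact: Q_mono le_r _ Qm.
exact: minm.
Qed.

Lemma dist_sym x y : dist H x y = dist H y x.
Proof.
by apply/anti_leq; rewrite !dist_leqE; apply/andP; split; apply: mem_Q_sym;
  rewrite -dist_leqE.
Qed.

Lemma NN_neq0 (F : numDomainType) r : (NN H r)%:R != 0 :> F.
Proof. by rewrite pnatr_eq0 -lt0n prodn_gt0 // => i; apply: nn_pos. Qed.

End Clusters.

Section Resolvent.
Variables (X : countType) (H : hier X).
Variables (R : realType) (p : nat -> R) (om : X -> R) (z : R[i]).
Hypothesis z_notin_sigma : ~ in_sigma H p om z.

Local Notation G r := (fun u w => Green H p om r u w z).
Local Notation g r := (fun t => gfun H p om r t z).

(* The entries of H_{om,r} - z as a function of two points, rather than of
   their positions in the enumeration of a cluster as in [Hmat]. *)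
Definition Hz r (w v : X) : R[i] :=
  ((om w * (w == v)%:R
       + \sum_(s < r.+1) p s / (NN H s)%:R * (dist H w v <= s)%:R)%:C)%C
  - z * (w == v)%:R.

Lemma Hz_sym r w v : Hz r w v = Hz r v w.
Proof.
have [->|ne] := eqVneq w v; first done.
by rewrite /Hz (negbTE ne) eq_sym (negbTE ne) dist_sym !mulr0.
Qed.

Lemma Hz_succ r w v : (dist H w v <= r.+1)%N ->
  Hz r.+1 w v = Hz r w v + (p r.+1)%:C%C / (NN H r.+1)%:R.
Proof.
move=> le_d; rewrite /Hz big_ord_recr /= le_d mulr1 addrA rmorphD /=.
by rewrite fmorph_div /= rmorph_nat addrAC.
Qed.

Lemma Hz_mx_unit r x : Hmat H p om r x - z%:M \in unitmx.
Proof.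
rewrite -row_free_unit -kermx_eq0; apply/negPn/negP => ker_neq0.
by apply: z_notin_sigma; exists r, x.
Qed.

Lemma Hz_mxE r x (i j : 'I_(size (Q H r x))) :
  (Hmat H p om r x - z%:M) i j = Hz r (nth x (Q H r x) i) (nth x (Q H r x) j).
Proof. by rewrite !mxE /Hz nth_uniq ?Q_uniq // [z * _]mulr_natr. Qed.

Lemma mx_atE k (A : 'M[R[i]]_k) (i j : 'I_k) : mx_at A i j = A i j.
Proof. by rewrite /mx_at !valK. Qed.

Lemma Green_cluster r x u w : u \in Q H r x -> w \in Q H r x ->
  G r u w =
  mx_at (invmx (Hmat H p om r x - z%:M)) (index u (Q H r x)) (index w (Q H r x)).
Proof.
move=> Qu Qw; have Qu_w : w \in Q H r u by rewrite (Q_canon Qu).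
rewrite /Green dist_leqE Qu_w /Hmat (Q_canon Qu).
congr (mx_at (invmx (_ - _)) _ _); apply/matrixP => i j; rewrite !mxE.
by rewrite !(set_nth_default x u).
Qed.

Lemma Green_far r u w : w \notin Q H r u -> G r u w = 0.
Proof. by move=> Qw; rewrite /Green dist_leqE (negbTE Qw). Qed.

Lemma Green_sym r u w : G r u w = G r w u.
Proof.
have [Qw|Qw] := boolP (w \in Q H r u); last first.
  by rewrite !Green_far //; apply: contra Qw; apply: mem_Q_sym.
have Qu := Q_self H r u.
rewrite (Green_cluster Qu Qw) (Green_cluster Qw Qu).
pose iu : 'I_(size (Q H r u)) := Ordinal (etrans (index_mem u _) Qu).
pose iw : 'I_(size (Q H r u)) := Ordinal (etrans (index_mem w _) Qw).
rewrite -[index u _]/(val iu) -[index w _]/(val iw) !mx_atE.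
have invT : (invmx (Hmat H p om r u - z%:M))^T = invmx (Hmat H p om r u - z%:M).
  rewrite trmx_inv; congr invmx; apply/matrixP => i j.
  by rewrite [in LHS]mxE !Hz_mxE Hz_sym.
by rewrite -[in RHS]invT mxE.
Qed.

Lemma Green_Hz_sum r x u v : u \in Q H r x -> v \in Q H r x ->
  \sum_(w <- Q H r x) G r u w * Hz r w v = (u == v)%:R.
Proof.
move=> Qu Qv; set C := Q H r x; have uC : uniq C by apply: Q_uniq.
pose iu : 'I_(size C) := Ordinal (etrans (index_mem u C) Qu).
pose iv : 'I_(size C) := Ordinal (etrans (index_mem v C) Qv).
have := congr1 (fun M : 'M[R[i]]_(size C) => M iu iv) (mulVmx (Hz_mx_unit r x)).
rewrite !mxE /= => GHz_id.
have -> : (u == v) = (iu == iv).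
  apply/eqP/eqP => [uv|/(congr1 val) /= uv]; first by apply: val_inj; rewrite /= uv.
  by rewrite -(nth_index x Qu) uv nth_index.
rewrite -GHz_id (big_nth x) big_mkord; apply: eq_bigr => i _.
rewrite (Green_cluster Qu) ?mem_nth // index_uniq //.
by rewrite -[index u C]/(val iu) mx_atE Hz_mxE /= nth_index.
Qed.

Lemma Hz_Green_sum r x w y : w \in Q H r x -> y \in Q H r x ->
  \sum_(v <- Q H r x) Hz r w v * G r v y = (w == y)%:R.
Proof.
move=> Qw Qy; rewrite eq_sym -(Green_Hz_sum Qy Qw); apply: eq_bigr => v _.
by rewrite mulrC Green_sym Hz_sym.
Qed.

(* G_r (H_r - z) = 1 still holds on a rank-(r+1) cluster, because both
   factors vanish between distinct rank-r subclusters. *)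
Lemma Green_Hz_sumS r x u v : u \in Q H r.+1 x -> v \in Q H r.+1 x ->
  \sum_(w <- Q H r.+1 x) G r u w * Hz r w v = (u == v)%:R.
Proof.
move=> Qu Qv; rewrite (@big_restrict_uniq _ _ _ (Q H r u)) ?Q_uniq //; first last.
- by move=> w Qw; rewrite Green_far ?mul0r.
- exact: Q_nest.
have [Qu_v|Qu_v] := boolP (v \in Q H r u); first exact: Green_Hz_sum (Q_self _ _ _) _.
have -> : (u == v) = false by apply/negbTE; apply: contra Qu_v => /eqP <-; apply: Q_self.
rewrite big_seq big1 // => w Qw; rewrite /Hz.
have -> : (w == v) = false by apply/negbTE; apply: contra Qu_v => /eqP <-.
rewrite big1 ?mulr0 ?addr0 ?subr0 ?rmorph0 ?mulr0 // => s _.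
have [le_ds|] := leqP (dist H w v) s; last by rewrite mulr0.
move: Qu_v; rewrite -(Q_canon Qw) -dist_leqE.
by rewrite (leq_trans le_ds) // -ltnS.
Qed.

Lemma sum_Green_col r y : \sum_(t <- Q H r y) G r t y = (NN H r)%:R * g r y.
Proof. by rewrite /gfun mulrA divff ?NN_neq0 // mul1r. Qed.

Lemma sum_Green_rowS r x :
  \sum_(w <- Q H r.+1 x) G r x w = (NN H r)%:R * g r x.
Proof.
rewrite -sum_Green_col (@big_restrict_uniq _ _ _ (Q H r x)) ?Q_uniq //.
- by apply: eq_bigr => w _; rewrite Green_sym.
- exact: Q_subS.
by move=> w Qw; rewrite Green_far.
Qed.

Lemma Green_Hz_sum_succ r x v : v \in Q H r.+1 x ->
  \sum_(w <- Q H r.+1 x) G r x w * Hz r.+1 w v =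
  (x == v)%:R + (p r.+1)%:C%C / (NN H r.+1)%:R * ((NN H r)%:R * g r x).
Proof.
move=> Qv; rewrite -sum_Green_rowS mulr_sumr -(Green_Hz_sumS (Q_self _ _ _) Qv).
rewrite -big_split /=; apply: eq_big_seq => w Qw.
rewrite Hz_succ; last by rewrite dist_leqE (Q_canon Qw).
by rewrite mulrDr; congr (_ + _); apply: mulrC.
Qed.

Lemma Green_succ r x y : y \in Q H r.+1 x ->
  G r x y = G r.+1 x y + (p r.+1)%:C%C * (NN H r)%:R * g r x * g r.+1 y.
Proof.
move=> Qy; set C := Q H r.+1 x; have uC : uniq C by apply: Q_uniq.
have -> : G r x y =
    \sum_(v <- C) (\sum_(w <- C) G r x w * Hz r.+1 w v) * G r.+1 v y.
  rewrite -[LHS](big_delta_seq (fun w => G r x w) uC Qy).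
  rewrite (eq_big_seq (fun w => G r x w *
    \sum_(v <- C) Hz r.+1 w v * G r.+1 v y)); last first.
    by move=> w Qw; rewrite Hz_Green_sum // mulrC eq_sym.
  under eq_bigr => w _ do rewrite mulr_sumr.
  rewrite exchange_big /=; apply: eq_bigr => v _; rewrite mulr_suml.
  by apply: eq_bigr => w _; rewrite mulrA.
under eq_big_seq => v Qv do rewrite Green_Hz_sum_succ // mulrDl.
rewrite big_split /= big_delta_seq ?Q_self // -mulr_sumr /C -(Q_canon Qy).
rewrite sum_Green_col; congr (_ + _).
by move: (NN_neq0 H R[i] r.+1) => ?; field.
Qed.

End Resolvent.

Unset Implicit Arguments.
Set Strict Implicit.

Theorem proposition5 (X : countType) (H : hier X) (R : realType)
  (p : nat -> R) (hp0 : p 0%N = 0) (hpos : forall r, (0 < r)%N -> 0 < p r)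
  (hsum : series p @ \oo --> (1 : R))
  (om : X -> R) (x y : X) (z : R[i]) (hz : ~ in_sigma H p om z) (r : nat) :
  Green H p om r x y z =
    Green H p om 0 x y z
    - \sum_(maxn 1 (dist H x y) <= s < r.+1)
        ((p s)%:C)%C * (NN H s.-1)%:R * gfun H p om s.-1 x z * gfun H p om s y z.
Proof.
elim: r => [|r IH]; first by rewrite big_geq ?subr0 // leq_maxl.
have [le_d|lt_d] := leqP (dist H x y) r.+1.
  rewrite big_nat_recr /=; last by rewrite geq_max le_d.
  have Qy : y \in Q H r.+1 x by rewrite -dist_leqE.
  by rewrite opprD addrA -IH (Green_succ hz Qy) addrK.
have far s : (s < dist H x y)%N -> Green H p om s x y z = 0.
  by move=> lt_s; rewrite /Green leqNgt lt_s.
rewrite !far ?(leq_ltn_trans _ lt_d) // big_geq ?subr0 //.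
by rewrite (leq_trans lt_d) // leq_maxr.
Qed.
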